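(* Standard models for CTT$_{\rm qe}$ exist, and every standard model for CTT$_{\rm qe}$ is a general model for CTT$_{\rm qe}$ (i.e., it admits a valuation function satisfying conditions (V1)–(V7)).
   Context: The logic CTT$_{\rm qe}$. Types: $\iota$ (individuals), $o$ (truth values), $\epsilon$ (constructions), and $(\alpha\to\beta)$ for types $\alpha,\beta$. Let $\mathcal V$ be a set of typed symbols (variables) containing denumerably many symbols $\mathbf{x}_\alpha$ of each type $\alpha$, and $\mathcal C$ a disjoint set of typed symbols (constants) containing the logical constants $=_{\alpha\to\alpha\to o}$ (each $\alpha$), $\mathsf{is\text{-}var}_{\epsilon\to o}$, $\mathsf{is\text{-}var}^\alpha_{\epsilon\to o}$, $\mathsf{is\text{-}con}_{\epsilon\to o}$, $\mathsf{is\text{-}con}^\alpha_{\epsilon\to o}$, $\mathsf{app}_{\epsilon\to\epsilon\to\epsilon}$, $\mathsf{abs}_{\epsilon\to\epsilon\to\epsilon}$, $\mathsf{quo}_{\epsilon\to\epsilon}$, $\mathsf{is\text{-}expr}_{\epsilon\to o}$, $\mathsf{is\text{-}expr}^\alpha_{\epsilon\to o}$ (each $\alpha$), $\sqsubset_{\epsilon\to\epsilon\to o}$, $\mathsf{is\text{-}free\text{-}in}_{\epsilon\to\epsilon\to o}$. Expressions $\mathbf{A}_\alpha$ (subscript = type) are defined inductively: (1) a variable $\mathbf{x}_\alpha$; (2) a constant $\mathbf{c}_\alpha$; (3) application $(\mathbf{F}_{\alpha\to\beta}\,\mathbf{A}_\alpha)$ of type $\beta$; (4) abstraction $(\lambda\mathbf{x}_\alpha.\mathbf{B}_\beta)$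 of type $\alpha\to\beta$; (5) quotation $\ulcorner\mathbf{A}_\alpha\urcorner$ of type $\epsilon$, formed only if $\mathbf{A}_\alpha$ is eval-free; (6) evaluation $[\![\mathbf{A}_\epsilon]\!]_{\mathbf{B}_\beta}$ of type $\beta$, written $[\![\mathbf{A}_\epsilon]\!]_\beta$ (the second component only fixes the type). An expression is eval-free if built using rules (1)–(5) only. A formula is an expression of type $o$. In an eval-free expression, an occurrence of a variable $\mathbf{x}_\alpha$ is free if it is not inside a quotation and not inside a subexpression of the form $\lambda\mathbf{x}_\alpha.\mathbf{C}$; $\mathbf{x}_\alpha$ is free in $\mathbf{B}$ if it has a free occurrence there. Constructions: the smallest set of expressions of type $\epsilon$ containing all $\ulcorner\mathbf{x}_\alpha\urcorner$ and $\ulcorner\mathbf{c}_\alpha\urcorner$ and closed under forming $\mathsf{app}\,\mathbf{A}_\epsilon\,\mathbf{B}_\epsilon$, $\mathsf{abs}\,\mathbf{A}_\epsilon\,\mathbf{B}_\epsilon$, $\mathsf{quo}\,\mathbf{A}_\epsilon$. The injective map $\mathcal E$ from eval-free expressions to constructions: $\mathcal E(\mathbf{x}_\alpha)=\ulcorner\mathbf{x}_\alpha\urcorner$, $\mathcal E(\mathbf{c}_\alpha)=\ulcorner\mathbf{c}_\alpha\urcorner$, $\mathcal E(\mathbf{F}\,\mathbf{A})=\mathsf{app}\,\mathcal E(\mathbf F)\,\mathcal E(\mathbf A)$, $\mathcal E(\lambda\mathbf{x}_\alpha.\mathbf B)=\mathsf{abs}\,\mathcal E(\mathbf x_\alpha)\,\mathcal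 E(\mathbf B)$, $\mathcal E(\ulcorner\mathbf A\urcorner)=\mathsf{quo}\,\mathcal E(\mathbf A)$. Abbreviations: $\mathbf A_\alpha=\mathbf B_\alpha$ is $=_{\alpha\to\alpha\to o}\mathbf A_\alpha\mathbf B_\alpha$; $T_o$ is $(=_{o\to o\to o}\,=\,=_{o\to o\to o})$; $F_o$ is $(\lambda x_o.T_o)=(\lambda x_o.x_o)$; $\forall\mathbf x_\alpha.\mathbf A_o$ is $(\lambda\mathbf x_\alpha.T_o)=(\lambda\mathbf x_\alpha.\mathbf A_o)$; $\neg\mathbf A_o$ is $=_{o\to o\to o}F_o\,\mathbf A_o$; $\exists\mathbf x_\alpha.\mathbf A_o$ is $\neg\forall\mathbf x_\alpha.\neg\mathbf A_o$; $\mathbf A\neq\mathbf B$ is $\neg(\mathbf A=\mathbf B)$; $\mathsf{IS\text{-}EFFECTIVE\text{-}IN}(\mathbf x_\alpha,\mathbf B_\beta)$ is $\exists\mathbf y_\alpha.((\lambda\mathbf x_\alpha.\mathbf B_\beta)\,\mathbf y_\alpha\neq\mathbf B_\beta)$ for a variable $\mathbf y_\alpha$ distinct from $\mathbf x_\alpha$. Semantics. A frame is $\{D_\alpha\}$ with $D_\iota$ nonempty, $D_o=\{\mathrm T,\mathrm F\}$, $D_\epsilon$ the set of all constructions, and $D_{\alpha\to\beta}$ some set of total functions $D_\alpha\to D_\beta$. An interpretation $(\{D_\alpha\},I)$ has $I(\mathbf c_\alpha)\in D_\alpha$ for each constant, with: $I(=_{\alpha\to\alpha\to o})$ the (curried)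 identity relation on $D_\alpha$; $I(\mathsf{is\text{-}var})(A)=\mathrm T$ iff $A=\ulcorner\mathbf x_\beta\urcorner$ for some variable of some type; $I(\mathsf{is\text{-}var}^\alpha)(A)=\mathrm T$ iff $A=\ulcorner\mathbf x_\alpha\urcorner$ for some variable of type $\alpha$; likewise $\mathsf{is\text{-}con}$, $\mathsf{is\text{-}con}^\alpha$ with constants; $I(\mathsf{app})(A)(B)$, $I(\mathsf{abs})(A)(B)$, $I(\mathsf{quo})(A)$ are the constructions $\mathsf{app}\,A\,B$, $\mathsf{abs}\,A\,B$, $\mathsf{quo}\,A$; $I(\mathsf{is\text{-}expr})(A)=\mathrm T$ iff $A=\mathcal E(\mathbf B_\beta)$ for some eval-free $\mathbf B_\beta$ of some type; $I(\mathsf{is\text{-}expr}^\alpha)(A)=\mathrm T$ iff $A=\mathcal E(\mathbf B_\alpha)$ for some eval-free $\mathbf B_\alpha$; $I(\sqsubset)(A)(B)=\mathrm T$ iff $A$ is a proper subexpression of $B$; $I(\mathsf{is\text{-}free\text{-}in})(A)(B)=\mathrm T$ iff $A=\ulcorner\mathbf x_\alpha\urcorner$, $B=\mathcal E(\mathbf C_\beta)$ for some eval-free $\mathbf C_\beta$, and $\mathbf x_\alpha$ is free in $\mathbf C_\beta$. An assignment $\phi$ maps each $\mathbf x_\alpha\in\mathcal V$ into $D_\alpha$; $\phi[\mathbf x_\alpha\mapsto d]$ is the usual modification. A general model is an interpretation $\mathcal M$ for which there is a valuation $V^{\mathcal M}_\phi(\mathbf C_\gamma)\in D_\gamma$ (for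 all $\phi$ and all expressions) with: (V1) $V_\phi(\mathbf x_\alpha)=\phi(\mathbf x_\alpha)$; (V2) $V_\phi(\mathbf c_\alpha)=I(\mathbf c_\alpha)$; (V3) $V_\phi(\mathbf F\,\mathbf A)=V_\phi(\mathbf F)(V_\phi(\mathbf A))$; (V4) $V_\phi(\lambda\mathbf x_\alpha.\mathbf B_\beta)$ is the $f\in D_{\alpha\to\beta}$ with $f(d)=V_{\phi[\mathbf x_\alpha\mapsto d]}(\mathbf B_\beta)$; (V5) $V_\phi(\ulcorner\mathbf A_\alpha\urcorner)=\mathcal E(\mathbf A_\alpha)$; (V6) if $V_\phi(\mathsf{is\text{-}expr}^\beta\,\mathbf A_\epsilon)=\mathrm T$ then $V_\phi([\![\mathbf A_\epsilon]\!]_\beta)=V_\phi(\mathcal E^{-1}(V_\phi(\mathbf A_\epsilon)))$; (V7) for each $\beta$ there is a fixed $d_\beta\in D_\beta$ such that $V_\phi([\![\mathbf A_\epsilon]\!]_\beta)=d_\beta$ whenever $V_\phi(\mathsf{is\text{-}expr}^\beta\,\mathbf A_\epsilon)=\mathrm F$. $\mathcal M\models\mathbf A_o$ ($\mathbf A_o$ valid in $\mathcal M$) iff $V_\phi(\mathbf A_o)=\mathrm T$ for all $\phi$; $\models\mathbf A_o$ (valid in CTT$_{\rm qe}$) iff valid in every general model. A standard model is an interpretation in which every $D_{\alpha\to\beta}$ is the set of all total functions $D_\alpha\to D_\beta$. *)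

From Stdlib Require Import Relations.Relation_Operators PeanoNat.
Set Implicit Arguments.

(** Types: iota (individuals), o (truth values), epsilon (constructions),
    and function types. *)
Inductive ty : Type := Iota | Omicron | Eps | Arr (a b : ty).

Definition ty_eq_dec : forall a b : ty, {a = b} + {a <> b}.
Proof. decide equality. Defined.

Section CTTqe.

Variable K : Type.
Variable kty : K -> ty.

Inductive con : Type :=
| CEq (a : ty)
| CIsVar
| CIsVarT (a : ty)
| CIsCon
| CIsConT (a : ty)
| CApp
| CAbs
| CQuo
| CIsExpr
| CIsExprT (a : ty)
| CSub                  (* proper subexpression relation *)
| CIsFreeIn
| CNL (k : K).

Definition cty (c : con) : ty :=
  match c with
  | CEq a => Arr a (Arr a Omicron)
  | CIsVar | CIsVarT _ | CIsCon | CIsConT _ | CIsExpr | CIsExprT _ => Arr Eps Omicron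
  | CApp | CAbs => Arr Eps (Arr Eps Eps)
  | CQuo => Arr Eps Eps
  | CSub | CIsFreeIn => Arr Eps (Arr Eps Omicron)
  | CNL k => kty k
  end.

(** Raw expressions.  Variables are the symbols x_a = (n, a).  The evaluation
    [[A]]_{B_b} is represented by [EEval A b] (B only fixes the type b). *)
Inductive expr : Type :=
| EVar (n : nat) (a : ty)
| ECon (c : con)
| EApp (f x : expr)
| EAbs (n : nat) (a : ty) (body : expr)
| EQuo (e : expr)
| EEval (e : expr) (b : ty).

Fixpoint eval_free (e : expr) : Prop :=
  match e with
  | EVar _ _ | ECon _ => True
  | EApp f x => eval_free f /\ eval_free x
  | EAbs _ _ body => eval_free body
  | EQuo e => eval_free e
  | EEval _ _ => False
  end.

Inductive wt : expr -> ty -> Prop :=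
| wt_var n a : wt (EVar n a) a
| wt_con c : wt (ECon c) (cty c)
| wt_app f x a b : wt f (Arr a b) -> wt x a -> wt (EApp f x) b
| wt_abs n a body b : wt body b -> wt (EAbs n a body) (Arr a b)
| wt_quo e a : wt e a -> eval_free e -> wt (EQuo e) Eps
| wt_eval e b : wt e Eps -> wt (EEval e b) b.

Fixpoint free_in (n : nat) (a : ty) (e : expr) : Prop :=
  match e with
  | EVar m b => m = n /\ b = a
  | ECon _ => False
  | EApp f x => free_in n a f \/ free_in n a x
  | EAbs m b body => ~ (m = n /\ b = a) /\ free_in n a body
  | EQuo _ => False
  | EEval e _ => free_in n a e
  end.

Inductive imm_sub : expr -> expr -> Prop :=
| is_app_l f x : imm_sub f (EApp f x)
| is_app_r f x : imm_sub x (EApp f x)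
| is_abs_v n a body : imm_sub (EVar n a) (EAbs n a body)
| is_abs_b n a body : imm_sub body (EAbs n a body)
| is_quo e : imm_sub e (EQuo e)
| is_eval e b : imm_sub e (EEval e b).

Definition proper_sub : expr -> expr -> Prop := clos_trans expr imm_sub.

Inductive is_constr : expr -> Prop :=
| ic_var n a : is_constr (EQuo (EVar n a))
| ic_con c : is_constr (EQuo (ECon c))
| ic_app A B : is_constr A -> is_constr B ->
    is_constr (EApp (EApp (ECon CApp) A) B)
| ic_abs A B : is_constr A -> is_constr B ->
    is_constr (EApp (EApp (ECon CAbs) A) B)
| ic_quo A : is_constr A -> is_constr (EApp (ECon CQuo) A).

Definition constr : Type := { e : expr | is_constr e }.

Fixpoint enc (e : expr) : expr :=
  match e with
  | EVar n a => EQuo (EVar n a)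
  | ECon c => EQuo (ECon c)
  | EApp f x => EApp (EApp (ECon CApp) (enc f)) (enc x)
  | EAbs n a body => EApp (EApp (ECon CAbs) (EQuo (EVar n a))) (enc body)
  | EQuo e => EApp (ECon CQuo) (enc e)
  | EEval e b => EEval e b (* E is only applied to eval-free expressions *)
  end.

(** Frames.  D_{a->b} is "some set of total functions D_a -> D_b", represented
    as a type [Dar a b] with an extensional (injective) application map [ap]. *)
Definition dom (Di : Type) (Dar : ty -> ty -> Type) (a : ty) : Type :=
  match a with
  | Iota => Di
  | Omicron => bool
  | Eps => constr
  | Arr a b => Dar a b
  end.

Record frame : Type := mkFrame {
  Di : Type;
  Di_ne : inhabited Di;
  Dar : ty -> ty -> Type;
  ap : forall a b, Dar a b -> dom Di Dar a -> dom Di Dar b;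
  ap_ext : forall a b (f g : Dar a b), (forall x, ap f x = ap g x) -> f = g
}.

Definition Dom (F : frame) (a : ty) : Type := dom (Di F) (Dar F) a.

Definition standard (F : frame) : Prop :=
  forall a b (g : Dom F a -> Dom F b),
    exists f : Dar F a b, forall x, @ap F a b f x = g x.

Definition is_interp (F : frame) (I : forall c : con, Dom F (cty c)) : Prop :=
  (forall a (x y : Dom F a),
      @ap F a Omicron (@ap F a (Arr a Omicron) (I (CEq a)) x) y = true <-> x = y)
  /\ (forall A : constr, @ap F Eps Omicron (I CIsVar) A = true <->
        exists n a, proj1_sig A = EQuo (EVar n a))
  /\ (forall a (A : constr), @ap F Eps Omicron (I (CIsVarT a)) A = true <->
        exists n, proj1_sig A = EQuo (EVar n a))
  /\ (forall A : constr, @ap F Eps Omicron (I CIsCon) A = true <->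
        exists c, proj1_sig A = EQuo (ECon c))
  /\ (forall a (A : constr), @ap F Eps Omicron (I (CIsConT a)) A = true <->
        exists c, cty c = a /\ proj1_sig A = EQuo (ECon c))
  /\ (forall A B : constr,
        proj1_sig (@ap F Eps Eps (@ap F Eps (Arr Eps Eps) (I CApp) A) B : constr)
        = EApp (EApp (ECon CApp) (proj1_sig A)) (proj1_sig B))
  /\ (forall A B : constr,
        proj1_sig (@ap F Eps Eps (@ap F Eps (Arr Eps Eps) (I CAbs) A) B : constr)
        = EApp (EApp (ECon CAbs) (proj1_sig A)) (proj1_sig B))
  /\ (forall A : constr,
        proj1_sig (@ap F Eps Eps (I CQuo) A : constr)
        = EApp (ECon CQuo) (proj1_sig A))
  /\ (forall A : constr, @ap F Eps Omicron (I CIsExpr) A = true <->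
        exists B b, wt B b /\ eval_free B /\ proj1_sig A = enc B)
  /\ (forall a (A : constr), @ap F Eps Omicron (I (CIsExprT a)) A = true <->
        exists B, wt B a /\ eval_free B /\ proj1_sig A = enc B)
  /\ (forall A B : constr,
        @ap F Eps Omicron (@ap F Eps (Arr Eps Omicron) (I CSub) A) B = true <->
        proper_sub (proj1_sig A) (proj1_sig B))
  /\ (forall A B : constr,
        @ap F Eps Omicron (@ap F Eps (Arr Eps Omicron) (I CIsFreeIn) A) B = true <->
        exists n a C b, proj1_sig A = EQuo (EVar n a) /\ wt C b /\ eval_free C
                        /\ proj1_sig B = enc C /\ free_in n a C).

Definition asg (F : frame) : Type := forall (n : nat) (a : ty), Dom F a.

Definition upd (F : frame) (phi : asg F) (n : nat) (a : ty) (d : Dom F a) : asg F :=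
  fun m b =>
    match ty_eq_dec a b with
    | left H => if Nat.eq_dec n m then eq_rect a (Dom F) d b H else phi m b
    | right _ => phi m b
    end.

(** V is a valuation (conditions (V1)-(V7)); V phi a e is V_phi(e) for e of type a. *)
Definition is_valuation (F : frame) (I : forall c : con, Dom F (cty c))
    (V : asg F -> forall a : ty, expr -> Dom F a) : Prop :=
  (forall phi n a, V phi a (EVar n a) = phi n a)
  /\ (forall phi c, V phi (cty c) (ECon c) = I c)
  /\ (forall phi f x a b, wt f (Arr a b) -> wt x a ->
        V phi b (EApp f x) = @ap F a b (V phi (Arr a b) f) (V phi a x))
  /\ (forall phi n a body b, wt body b ->
        forall d : Dom F a,
          @ap F a b (V phi (Arr a b) (EAbs n a body)) d = V (upd phi n a d) b body)
  /\ (forall phi e a, wt e a -> eval_free e ->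
        proj1_sig (V phi Eps (EQuo e) : constr) = enc e)
  /\ (forall phi A b, wt A Eps ->
        V phi Omicron (EApp (ECon (CIsExprT b)) A) = true ->
        forall B, wt B b -> eval_free B ->
          enc B = proj1_sig (V phi Eps A : constr) ->
          V phi b (EEval A b) = V phi b B)
  /\ (forall b, exists d : Dom F b,
        forall phi A, wt A Eps ->
          V phi Omicron (EApp (ECon (CIsExprT b)) A) = false ->
          V phi b (EEval A b) = d).

Definition general_model (F : frame) (I : forall c : con, Dom F (cty c)) : Prop :=
  @is_interp F I /\ exists V, @is_valuation F I V.

Definition standard_model (F : frame) (I : forall c : con, Dom F (cty c)) : Prop :=
  @is_interp F I /\ standard F.

End CTTqe.

(* Existence: over a one-point domain of individuals take the full function
   hierarchy; in a standard frame the meaning prescribed for each logical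
   constant is a total function and hence an element of the frame, so every
   standard frame carries an interpretation.

   Standard models are general models: the valuation is defined by structural
   recursion on expressions, standardness supplying the value of an
   abstraction.  An evaluation [[A]]_b is valued by decoding V(A) through the
   encoding E, which is injective on eval-free expressions, and valuing the
   decoded expression; since that expression is eval-free, a valuation that
   ignores evaluations already gives it its correct value, which breaks the
   circularity. *)
From Stdlib Require Import ClassicalEpsilon FunctionalExtensionality Eqdep_dec.

Definition bool_of (P : Prop) : bool :=
  if excluded_middle_informative P then true else false.

Lemma bool_of_true (P : Prop) : bool_of P = true <-> P.
Proof.
  unfold bool_of; destruct (excluded_middle_informative P); split; congruence || tauto.
Qed.

Section StandardFrame.

Variable K : Type.
Variable F : frame K.
Hypothesis F_std : standard F.

Definition fun_elem {a b : ty} (g : Dom F a -> Dom F b) : Dom F (Arr a b) :=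
  proj1_sig (constructive_indefinite_description _ (F_std a b g)).

Lemma ap_fun_elem a b (g : Dom F a -> Dom F b) x : @ap K F a b (fun_elem g) x = g x.
Proof. unfold fun_elem; destruct constructive_indefinite_description; auto. Qed.

Definition some_individual : Di F :=
  proj1_sig (constructive_indefinite_description (fun _ : Di F => True)
    (match Di_ne F with inhabits x => ex_intro _ x I end)).

Definition some_constr : constr K := exist _ (EQuo (ECon (CQuo K))) (ic_con _).

Fixpoint dom_default (a : ty) : Dom F a :=
  match a return Dom F a with
  | Iota => some_individual
  | Omicron => true
  | Eps => some_constr
  | Arr _ b => fun_elem (fun _ => dom_default b)
  end.

Variable kty : K -> ty.

Definition std_interp (c : con K) : Dom F (cty kty c) :=
  match c return Dom F (cty kty c) with
  | CEq _ a => fun_elem (fun x => fun_elem (b := Omicron) (fun y => bool_of (x = y)))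
  | CIsVar _ => fun_elem (a := Eps) (b := Omicron)
      (fun A => bool_of (exists n a, proj1_sig A = EQuo (EVar K n a)))
  | CIsVarT _ a => fun_elem (a := Eps) (b := Omicron)
      (fun A => bool_of (exists n, proj1_sig A = EQuo (EVar K n a)))
  | CIsCon _ => fun_elem (a := Eps) (b := Omicron)
      (fun A => bool_of (exists c, proj1_sig A = EQuo (ECon c)))
  | CIsConT _ a => fun_elem (a := Eps) (b := Omicron)
      (fun A => bool_of (exists c, cty kty c = a /\ proj1_sig A = EQuo (ECon c)))
  | CApp _ => fun_elem (a := Eps) (b := Arr Eps Eps) (fun A => fun_elem (a := Eps) (b := Eps)
      (fun B => exist _ (EApp (EApp (ECon (CApp K)) (proj1_sig A)) (proj1_sig B))
                  (ic_app (proj2_sig A) (proj2_sig B))))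
  | CAbs _ => fun_elem (a := Eps) (b := Arr Eps Eps) (fun A => fun_elem (a := Eps) (b := Eps)
      (fun B => exist _ (EApp (EApp (ECon (CAbs K)) (proj1_sig A)) (proj1_sig B))
                  (ic_abs (proj2_sig A) (proj2_sig B))))
  | CQuo _ => fun_elem (a := Eps) (b := Eps)
      (fun A => exist _ (EApp (ECon (CQuo K)) (proj1_sig A)) (ic_quo (proj2_sig A)))
  | CIsExpr _ => fun_elem (a := Eps) (b := Omicron)
      (fun A => bool_of (exists B b, wt kty B b /\ eval_free B /\ proj1_sig A = enc B))
  | CIsExprT _ a => fun_elem (a := Eps) (b := Omicron)
      (fun A => bool_of (exists B, wt kty B a /\ eval_free B /\ proj1_sig A = enc B))
  | CSub _ => fun_elem (a := Eps) (b := Arr Eps Omicron) (fun A => fun_elem (a := Eps) (b := Omicron)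
      (fun B => bool_of (proper_sub (proj1_sig A) (proj1_sig B))))
  | CIsFreeIn _ => fun_elem (a := Eps) (b := Arr Eps Omicron) (fun A => fun_elem (a := Eps) (b := Omicron)
      (fun B => bool_of (exists n a C b, proj1_sig A = EQuo (EVar K n a) /\ wt kty C b
                          /\ eval_free C /\ proj1_sig B = enc C /\ free_in n a C)))
  | CNL k => dom_default (kty k)
  end.

Lemma std_interp_is_interp : is_interp kty F std_interp.
Proof.
  unfold is_interp; simpl.
  repeat split; intros; rewrite ?ap_fun_elem in *; simpl in *;
    try (apply bool_of_true; assumption); try (apply bool_of_true in H; assumption); auto.
Qed.

End StandardFrame.

Arguments fun_elem {K F} F_std {a b} g.
Arguments dom_default {K F} F_std a.
Arguments std_interp {K F} F_std kty c.

Section FullHierarchy.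

Variable K : Type.

Fixpoint full (a : ty) : Type :=
  match a with
  | Iota => unit
  | Omicron => bool
  | Eps => constr K
  | Arr a b => full a -> full b
  end.

Definition full_arr (a b : ty) : Type := full a -> full b.

(* [dom K unit full_arr a] and [full a] agree for every [a], but only after
   case analysis on [a]; these are the two identity coercions. *)
Definition to_full (a : ty) : dom K unit full_arr a -> full a :=
  match a with Iota | Omicron | Eps | Arr _ _ => fun x => x end.

Definition of_full (a : ty) : full a -> dom K unit full_arr a :=
  match a with Iota | Omicron | Eps | Arr _ _ => fun x => x end.

Lemma to_of_full a y : to_full a (of_full a y) = y.
Proof. destruct a; reflexivity. Qed.

Lemma of_to_full a y : of_full a (to_full a y) = y.
Proof. destruct a; reflexivity. Qed.

Definition full_ap (a b : ty) (f : full_arr a b) (x : dom K unit full_arr a)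
  : dom K unit full_arr b :=
  of_full b (f (to_full a x)).

Lemma full_ap_ext a b (f g : full_arr a b) :
  (forall x, full_ap a b f x = full_ap a b g x) -> f = g.
Proof.
  intros H; apply functional_extensionality; intro y.
  specialize (H (of_full a y)); unfold full_ap in H; rewrite !to_of_full in H.
  apply (f_equal (to_full b)) in H; rewrite !to_of_full in H; exact H.
Qed.

Definition full_frame : frame K := mkFrame K (inhabits tt) full_arr full_ap full_ap_ext.

Lemma full_frame_standard : standard full_frame.
Proof.
  intros a b g; exists (fun y => to_full b (g (of_full a y))); intro x.
  simpl; unfold full_ap; rewrite !of_to_full; reflexivity.
Qed.

End FullHierarchy.

Lemma enc_is_constr K (e : expr K) : eval_free e -> is_constr (enc e).
Proof. induction e; simpl; intros; repeat constructor; tauto. Qed.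

Lemma enc_inj K (B1 B2 : expr K) :
  eval_free B1 -> eval_free B2 -> enc B1 = enc B2 -> B1 = B2.
Proof.
  revert B2; induction B1; intros B2 H1 H2 He; destruct B2; simpl in *;
    try tauto; try discriminate; injection He; intros; subst; f_equal; auto;
    [apply IHB1_1 | apply IHB1_2]; tauto.
Qed.

Section Valuation.

Variable K : Type.
Variable kty : K -> ty.
Variable F : frame K.
Hypothesis F_std : standard F.
Variable I : forall c : con K, Dom F (cty kty c).

Fixpoint type_of (e : expr K) : ty :=
  match e with
  | EVar _ _ a => a
  | ECon c => cty kty c
  | EApp f _ => match type_of f with Arr _ b => b | _ => Iota end
  | EAbs _ a body => Arr a (type_of body)
  | EQuo _ => Eps
  | EEval _ b => b
  end.

Lemma wt_type_of e a : wt kty e a -> type_of e = a.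
Proof. induction 1; simpl; auto; rewrite ?IHwt1, ?IHwt; auto. Qed.

Definition con_val (c : con K) (a : ty) : Dom F a :=
  match ty_eq_dec (cty kty c) a with
  | left H => eq_rect _ (Dom F) (I c) a H
  | right _ => dom_default F_std a
  end.

Lemma con_val_cty c : con_val c (cty kty c) = I c.
Proof.
  unfold con_val; destruct (ty_eq_dec (cty kty c) (cty kty c)) as [H|H]; [|congruence].
  rewrite (UIP_dec ty_eq_dec H eq_refl); reflexivity.
Qed.

Definition quo_val (e : expr K) (a : ty) : Dom F a :=
  match a return Dom F a with
  | Eps => match excluded_middle_informative (is_constr (enc e)) with
           | left H => exist _ (enc e) H
           | right _ => some_constr K
           end
  | a' => dom_default F_std a'
  end.

Fixpoint val (ev : Dom F Eps -> asg F -> forall a, Dom F a)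
    (e : expr K) (phi : asg F) (a : ty) : Dom F a :=
  match e with
  | EVar _ n _ => phi n a
  | ECon c => con_val c a
  | EApp f x => @ap K F (type_of x) a (val ev f phi (Arr (type_of x) a))
                                     (val ev x phi (type_of x))
  | EAbs n _ body =>
      match a return Dom F a with
      | Arr a1 b1 => fun_elem F_std (fun d => val ev body (upd phi n a1 d) b1)
      | a' => dom_default F_std a'
      end
  | EQuo e => quo_val e a
  | EEval A _ => ev (val ev A phi Eps) phi a
  end.

Lemma val_eval_free ev ev' e :
  eval_free e -> forall phi a, val ev e phi a = val ev' e phi a.
Proof.
  induction e; simpl; intros Hef phi a0; try reflexivity; try tauto.
  - destruct Hef; rewrite IHe1, IHe2; auto.
  - destruct a0; try reflexivity.
    f_equal; apply functional_extensionality; auto.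
Qed.

Definition decode_val (A : Dom F Eps) (phi : asg F) (a : ty) : Dom F a :=
  match excluded_middle_informative
          (exists B, wt kty B a /\ eval_free B /\ proj1_sig (A : constr K) = enc B) with
  | left H => val (fun _ _ => dom_default F_std)
                  (proj1_sig (constructive_indefinite_description _ H)) phi a
  | right _ => dom_default F_std a
  end.

Lemma decode_val_enc A phi b B :
  wt kty B b -> eval_free B -> proj1_sig (A : constr K) = enc B ->
  decode_val A phi b = val decode_val B phi b.
Proof.
  intros HB HefB Henc; unfold decode_val at 1.
  destruct excluded_middle_informative as [H|H]; [|exfalso; eauto].
  destruct constructive_indefinite_description as [B0 (HwtB0 & HefB0 & HencB0)]; simpl.
  assert (B0 = B) as -> by (apply enc_inj; congruence).
  apply val_eval_free; exact HefB.
Qed.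

Lemma decode_val_not_enc A phi b :
  ~ (exists B, wt kty B b /\ eval_free B /\ proj1_sig (A : constr K) = enc B) ->
  decode_val A phi b = dom_default F_std b.
Proof.
  intros Hnone; unfold decode_val.
  destruct excluded_middle_informative as [H|_]; [contradiction | reflexivity].
Qed.

Definition std_val (phi : asg F) (a : ty) (e : expr K) : Dom F a := val decode_val e phi a.

End Valuation.

Arguments wt_type_of {K kty e a}.
Arguments std_val {K} kty {F} F_std I phi a e.

Lemma std_val_is_valuation K (kty : K -> ty) (F : frame K) (F_std : standard F)
    (I : forall c : con K, Dom F (cty kty c)) :
  is_interp kty F I -> is_valuation kty I (std_val kty F_std I).
Proof.
  intros HI; destruct HI as (_&_&_&_&_&_&_&_&_&Hexpr&_).
  unfold is_valuation, std_val; repeat split.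
  - intros; apply con_val_cty.
  - intros phi f x a b Hf Hx; simpl; rewrite (wt_type_of Hx); reflexivity.
  - intros; simpl; rewrite ap_fun_elem; reflexivity.
  - intros phi e a _ Hef; simpl; unfold quo_val.
    destruct excluded_middle_informative as [H|H]; [reflexivity|].
    exfalso; apply H, enc_is_constr; auto.
  - intros phi A b HA _ B HB HefB Henc; apply decode_val_enc; auto.
  - intros b; exists (dom_default F_std b); intros phi A HA Hfalse.
    simpl in Hfalse |- *; apply decode_val_not_enc; intros Hdec.
    rewrite (wt_type_of HA) in Hfalse.
    change (Arr Eps Omicron) with (cty kty (CIsExprT K b)) in Hfalse.
    rewrite con_val_cty in Hfalse.
    pose proof (proj2 (Hexpr b _) Hdec) as Htrue; congruence.
Qed.

Theorem mainTheorem1 :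
  forall (K : Type) (kty : K -> ty),
    (exists (F : frame K) (I : forall c : con K, Dom F (cty kty c)),
        standard_model kty F I)
    /\ (forall (F : frame K) (I : forall c : con K, Dom F (cty kty c)),
          standard_model kty F I -> general_model kty F I).
Proof.
  intros K kty; split.
  - exists (full_frame K), (std_interp (full_frame_standard K) kty).
    split; [apply std_interp_is_interp | apply full_frame_standard].
  - intros F I [HI F_std]; split; [exact HI|].
    exists (std_val kty F_std I); apply std_val_is_valuation; exact HI.
Qed.
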